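(* For any noisy discrete memoryless classical channel $N_n$, the parallel use of $N_n$ with a perfect $2$-level quantum channel cannot exhibit one-shot zero-error superadditivity under the vertex-encoding protocol; that is, no implementation of the vertex-encoding protocol with $d=2$ transmits more than $\alpha(G(N_n))\cdot 2$ messages.
   Context: A discrete memoryless classical channel $N$ has finite input alphabet $\mathcal{X}$, finite output alphabet $\mathcal{Y}$ and conditional probabilities $P(y|x)$. Distinct inputs $x,x'$ are confusable if some output $y$ has $P(y|x)>0$ and $P(y|x')>0$; the confusability graph $G(N)$ has vertex set $\mathcal{X}$ and edges between distinct confusable inputs, and $\alpha(G(N))$ (its independence number) is the one-shot zero-error capacity of $N$. For each output $y$, the hyperedge $h_y=\{x: P(y|x)>0\}$. A perfect $d$-level quantum channel is the identity channel on states of $\mathbb{C}^d$, with one-shot zero-error capacity $d$. The vertex-encoding protocol with a perfect $d$-level quantum channel: one assigns to every input $v\in\mathcal{X}$ a unit vector $\ket{\psi_v}\in\mathbb{C}^d$ such that $\ket{\psi_v}\perp\ket{\psi_w}$ whenever $v,w$ are adjacent in $G(N)$. Messages are identified with the $n=|\mathcal{X}|$ inputs; to send $v$, the sender inputs $v$ into $N$ and sends $\ket{\psi_v}$ through the perfect quantum channel; upon seeing output $y$, the receiver performs a projective measurement containing the projectors $\ket{\psi_w}\!\bra{\psi_w}$, $w\in h_y$ (completed to the identity), which identifies $v$ with certainty. The protocol transmits $n$ messages with zero error, and it exhibits one-shot zero-error superadditivity if $n>\alpha(G(N))\cdot d$. *)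

From HB Require Import structures.
From mathcomp Require Import all_boot all_order all_algebra.
From mathcomp Require Import complex.
From mathcomp Require Import reals.
Set Implicit Arguments. Unset Strict Implicit. Unset Printing Implicit Defensive.
Import Order.TTheory GRing.Theory Num.Theory.
Local Open Scope ring_scope.

Section Channel.
Variables (R : realType) (X Y : finType).

(* A discrete memoryless classical channel: conditional probabilities P(y|x),
   written P x y. *)
Definition is_channel (P : X -> Y -> R) : Prop :=
  (forall x y, 0 <= P x y) /\ (forall x, \sum_(y : Y) P x y = 1).

Definition confusable (P : X -> Y -> R) (x x' : X) : bool :=
  (x != x') && [exists y : Y, (0 < P x y) && (0 < P x' y)].

Definition independent (P : X -> Y -> R) (S : {set X}) : bool :=
  [forall x in S, forall x' in S, ~~ confusable P x x'].

Definition alpha (P : X -> Y -> R) : nat :=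
  \max_(S : {set X} | independent P S) #|S|.

Definition cinner (d : nat) (u v : 'cV[R[i]]_d) : R[i] :=
  \sum_(k < d) (u k 0)^* * v k 0.

(* orthogonal representation of G(N) in C^d by unit vectors: the data of
   the vertex-encoding protocol with a perfect d-level quantum channel *)
Definition vertex_encoding (P : X -> Y -> R) (d : nat)
  (psi : X -> 'cV[R[i]]_d) : Prop :=
  (forall v, cinner (psi v) (psi v) = 1) /\
  (forall v w, confusable P v w -> cinner (psi v) (psi w) = 0).

End Channel.

(** A unit vector (a, b) of C^2 determines the point
    (|a|^2 - |b|^2, Re (a^* b), Im (a^* b)) of R^3 (a rescaled Bloch vector),
    which is never 0, and orthogonal unit vectors determine opposite points.
    Colouring the nonzero points of R^3 by their lexicographic sign gives
    opposite points different colours, so an orthogonal representation of G(N)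
    in C^2 two-colours G(N).  Both colour classes are independent, hence
    |X| <= 2 alpha(G(N)). *)
From HB Require Import structures.
From mathcomp Require Import all_boot all_order all_algebra.
From mathcomp Require Import complex.
From mathcomp Require Import reals.
From mathcomp Require Import ring.
Set Implicit Arguments. Unset Strict Implicit. Unset Printing Implicit Defensive.
Import Order.TTheory GRing.Theory Num.Theory.
Local Open Scope ring_scope.

Section LexicographicSign.
Variable R : numDomainType.

Definition lexpos (x y z : R) : bool :=
  (0 < x) || (x == 0) && ((0 < y) || (y == 0) && (0 < z)).

Lemma lexposN x y z : x \is Num.real -> y \is Num.real -> z \is Num.real ->
  ~~ [&& x == 0, y == 0 & z == 0] -> lexpos (- x) (- y) (- z) = ~~ lexpos x y z.
Proof.
move=> rx ry rz nz; rewrite /lexpos !oppr_gt0 !oppr_eq0.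
case: (real_ltgtP rx (real0 _)) nz => //= _;
case: (real_ltgtP ry (real0 _)) => //= _;
case: (real_ltgtP rz (real0 _)) => //=.
Qed.

End LexicographicSign.

Section Qubit.
Variable C : numClosedFieldType.

Definition hemisphere (a b : C) : bool :=
  lexpos (a^* * a - b^* * b) ('Re (a^* * b)) ('Im (a^* * b)).

Section Orthogonal.
Variables a b w1 w2 : C.
Hypothesis unit_ab : a^* * a + b^* * b = 1.
Hypothesis unit_w : w1^* * w1 + w2^* * w2 = 1.
Hypothesis orth : a^* * w1 + b^* * w2 = 0.

Let orthE : a^* * w1 = - (b^* * w2).
Proof. by apply/eqP; rewrite -subr_eq0 opprK orth. Qed.

Let orthE_conj : a * w1^* = - (b * w2^*).
Proof. by have := congr1 Num.conj orthE; rewrite rmorphN !rmorphM /= !conjCK. Qed.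

Lemma orth_unit_norm1 : w1^* * w1 = b^* * b.
Proof.
(* |a|^2 |w1|^2 = |a^* w1|^2 = |b^* w2|^2 = |b|^2 |w2|^2 *)
have norms : a^* * a * (w1^* * w1) = b^* * b * (w2^* * w2).
  have -> : a^* * a * (w1^* * w1) = (a^* * w1) * (a * w1^*) by ring.
  by rewrite orthE orthE_conj; ring.
have -> : w1^* * w1 = b^* * b + (a^* * a * (w1^* * w1) - b^* * b * (w2^* * w2))
    - b^* * b * (1 - (w1^* * w1 + w2^* * w2))
    + (1 - (a^* * a + b^* * b)) * (w1^* * w1) by ring.
by rewrite norms unit_ab unit_w !subrr mulr0 mul0r !subr0 !addr0.
Qed.

Lemma orth_unit_norm2 : w2^* * w2 = a^* * a.
Proof.
by apply/eqP; rewrite -(inj_eq (addrI (w1^* * w1))) unit_w orth_unit_norm1 addrC unit_ab.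
Qed.

Lemma orth_unit_cross : w1^* * w2 = - (a^* * b).
Proof.
have [b0 | bN0] := eqVneq (b^* * b) 0.
  have -> : b = 0 by apply/eqP; rewrite -mul_conjC_eq0 mulrC b0.
  have -> : w1 = 0 by apply/eqP; rewrite -mul_conjC_eq0 mulrC orth_unit_norm1 b0.
  by rewrite rmorph0 !mul0r mulr0 oppr0.
have : b^* * b * (a^* * b + w1^* * w2) = 0.
  have -> : b^* * b * (a^* * b + w1^* * w2) = (a^* * w1) * (b * w1^*)
      + (b^* * w2) * (b * w1^*) - (w1^* * w1 - b^* * b) * (a^* * b) by ring.
  by rewrite orthE orth_unit_norm1 subrr mul0r subr0 mulNr addNr.
by move/eqP; rewrite mulf_eq0 (negPf bN0) /= addrC addr_eq0 => /eqP.
Qed.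

End Orthogonal.

Lemma bloch_neq0 (a b : C) : a^* * a + b^* * b = 1 ->
  ~~ [&& a^* * a - b^* * b == 0, 'Re (a^* * b) == 0 & 'Im (a^* * b) == 0].
Proof.
move=> unit_ab; apply/negP => /and3P [/eqP z0 /eqP re0 /eqP im0].
have ab0 : a^* * b = 0 by rewrite [LHS]Crect re0 im0 mulr0 addr0.
have eq_norms : a^* * a = b^* * b by apply/eqP; rewrite -subr_eq0 z0.
have : (a^* * a) * (b^* * b) = 0.
  have -> : (a^* * a) * (b^* * b) = (a^* * b) * (b^* * a) by ring.
  by rewrite ab0 mul0r.
rewrite -eq_norms => /eqP; rewrite mulf_eq0 orbb => /eqP a0.
by move: unit_ab; rewrite -eq_norms a0 addr0 => /eqP; rewrite eq_sym oner_eq0.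
Qed.

Lemma hemisphere_orth (a b w1 w2 : C) :
  a^* * a + b^* * b = 1 -> w1^* * w1 + w2^* * w2 = 1 ->
  a^* * w1 + b^* * w2 = 0 -> hemisphere w1 w2 = ~~ hemisphere a b.
Proof.
move=> unit_ab unit_w orth.
rewrite /hemisphere (orth_unit_norm1 unit_ab unit_w orth).
rewrite (orth_unit_norm2 unit_ab unit_w orth) (orth_unit_cross unit_ab unit_w orth).
rewrite !raddfN /= -opprB lexposN ?Creal_Re ?Creal_Im ?bloch_neq0 //.
by rewrite rpredB // ger0_real // mulrC mul_conjC_ge0.
Qed.

End Qubit.

Lemma cinner2 (R : realType) (u v : 'cV[R[i]]_2) :
  cinner u v = (u ord0 0)^* * v ord0 0 + (u ord_max 0)^* * v ord_max 0.
Proof.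
have -> : ord_max = lift ord0 ord0 :> 'I_2 by apply: val_inj.
by rewrite /cinner !big_ord_recl big_ord0 addr0.
Qed.

Section ConfusabilityGraph.
Variables (R : realType) (X Y : finType) (P : X -> Y -> R).

Lemma card_le_alpha (S : {set X}) : independent P S -> (#|S| <= alpha P)%N.
Proof. exact: leq_bigmax_cond. Qed.

Section TwoColouring.
Variable c : X -> bool.
Hypothesis colouring : forall v w, confusable P v w -> c w = ~~ c v.

Lemma independent_colour_class (b : bool) : independent P [set v | c v == b].
Proof.
apply/forall_inP => v; rewrite inE => /eqP cv; apply/forall_inP => w.
rewrite inE => /eqP cw; apply/negP => /colouring.
by rewrite cv cw; case: b {cv cw}.
Qed.

Lemma two_colourable_card_le : (#|X| <= alpha P * 2)%N.
Proof.
have colour_classC : ~: [set v | c v == true] = [set v | c v == false].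
  by apply/setP => v; rewrite !inE; case: (c v).
rewrite -(cardsC [set v | c v == true]) colour_classC muln2 -addnn.
by apply: leq_add; apply/card_le_alpha/independent_colour_class.
Qed.

End TwoColouring.

End ConfusabilityGraph.

Theorem corollary1 (R : realType) (X Y : finType) (P : X -> Y -> R)
  (psi : X -> 'cV[R[i]]_2) :
  is_channel P -> vertex_encoding P psi ->
  (#|X| <= alpha P * 2)%N.
Proof.
(* Only the supports of the P x matter. *)
move=> _ [unit_psi orth_psi].
apply: (@two_colourable_card_le _ _ _ P
  (fun v => hemisphere (psi v ord0 0) (psi v ord_max 0))) => v w vw.
by apply: hemisphere_orth; rewrite -cinner2;
  [apply: unit_psi | apply: unit_psi | apply: orth_psi].
Qed.
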